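(* Let $(G_n)_{n\in\mathbb N}$ be a sequence of groups, let $A$ be a finite subset of $\mathbb N$, and let $(P_n)_{n\in\mathbb N}$ be a partition of $\mathbb N\setminus A$ into finite sets. Then $\mathcal A(G_n)\cong\mathcal A( *_{i\in P_n}G_i)$, the archipelago group of the sequence $( *_{i\in P_n}G_i)_{n\in\mathbb N}$.
   Context: For a sequence of groups $(G_n)_{n\in\mathbb N}$, an infinite word is a map $w:L\to\bigsqcup_n (G_n\setminus\{1\})$ from a countable linearly ordered set $L$ such that $w^{-1}(G_n)$ is finite for every $n$. Two infinite words are equivalent if for every $m$ their restrictions to the letters from $G_1,\dots,G_m$ represent the same element of $G_1*\cdots*G_m$. The topologist's product $\circledast_n G_n$ is the group of equivalence classes, with multiplication induced by concatenation and inversion by reversing the order and inverting each letter. The free product $*_n G_n$ is the subgroup of classes of finite words. The archipelago group is $\mathcal A(G_n):=\circledast_n G_n/\langle\langle *_n G_n\rangle\rangle$ (quotient by normal closure). *)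

From Stdlib Require Import List Arith Relations Sorting.Sorted.
Import ListNotations.

(** A group presented by its operations, with an equivalence [geq]
   (for the input groups this is required to be Leibniz equality). *)
Record GrpOps := mkGrp {
  gcar : Type;
  geq : gcar -> gcar -> Prop;
  gmul : gcar -> gcar -> gcar;
  ginv : gcar -> gcar;
  gone : gcar }.
Arguments geq g _ _ : clear implicits.
Arguments gmul g _ _ : clear implicits.
Arguments ginv g _ : clear implicits.
Arguments gone g : clear implicits.

Definition is_group (G : GrpOps) : Prop :=
  (forall x y, geq G x y <-> x = y) /\
  (forall x y z, gmul G x (gmul G y z) = gmul G (gmul G x y) z) /\
  (forall x, gmul G (gone G) x = x) /\ (forall x, gmul G x (gone G) = x) /\
  (forall x, gmul G (ginv G x) x = gone G) /\ (forall x, gmul G x (ginv G x) = gone G).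

Section FreeProd.
Variables (I : Type) (F : I -> GrpOps).
Definition fletter := {i : I & gcar (F i)}.
Inductive fp_step : list fletter -> list fletter -> Prop :=
| fp_merge : forall w w' i (g h : gcar (F i)),
    fp_step (w ++ existT _ i g :: existT _ i h :: w')
            (w ++ existT _ i (gmul (F i) g h) :: w')
| fp_del : forall w w' i (g : gcar (F i)), geq (F i) g (gone (F i)) ->
    fp_step (w ++ existT _ i g :: w') (w ++ w')
| fp_repl : forall w w' i (g h : gcar (F i)), geq (F i) g h ->
    fp_step (w ++ existT _ i g :: w') (w ++ existT _ i h :: w').
Definition fp_eq := clos_refl_sym_trans _ fp_step.
Definition fletter_inv (x : fletter) : fletter :=
  let (i, g) := x in existT _ i (ginv (F i) g).
Definition FreeProduct : GrpOps :=
  {| gcar := list fletter; geq := fp_eq; gmul := @app fletter;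
     ginv := fun w => rev (map fletter_inv w); gone := [] |}.
End FreeProd.

Definition Letter (G : nat -> GrpOps) := {n : nat & gcar (G n)}.

Record IWord (G : nat -> GrpOps) := mkIW {
  iL : Type;
  ilt : iL -> iL -> Prop;
  iw : iL -> Letter G }.
Arguments iL {G} i.
Arguments ilt {G} i _ _.
Arguments iw {G} i _.

Definition iw_wf {G} (u : IWord G) : Prop :=
  (forall x, ~ ilt u x x) /\
  (forall x y z, ilt u x y -> ilt u y z -> ilt u x z) /\
  (forall x y, ilt u x y \/ x = y \/ ilt u y x) /\
  (exists f : iL u -> nat, forall x y, f x = f y -> x = y) /\
  (forall n, exists l : list (iL u), forall x, projT1 (iw u x) = n -> In x l) /\
  (forall x, ~ geq (G (projT1 (iw u x))) (projT2 (iw u x)) (gone _)).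

Definition FP_first (G : nat -> GrpOps) (m : nat) : GrpOps :=
  FreeProduct {i : nat | i < m} (fun i => G (proj1_sig i)).

Definition restr_letter {G} (m : nat) (x : Letter G)
  : list (fletter {i : nat | i < m} (fun i => G (proj1_sig i))) :=
  let (n, g) := x in
  match Compare_dec.lt_dec n m with
  | left p => [existT (fun i : {i : nat | i < m} => gcar (G (proj1_sig i)))
                      (exist _ n p) g]
  | right _ => []
  end.

Definition restr_enum {G} (u : IWord G) (m : nat) (l : list (iL u)) : Prop :=
  StronglySorted (ilt u) l /\ (forall x, In x l <-> projT1 (iw u x) < m).

Definition restr_word {G} (u : IWord G) (m : nat) (l : list (iL u)) :=
  flat_map (fun x => restr_letter m (iw u x)) l.

Definition tp_eq {G} (u v : IWord G) : Prop :=
  forall m l1 l2, restr_enum u m l1 -> restr_enum v m l2 ->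
    geq (FP_first G m) (restr_word u m l1) (restr_word v m l2).

Definition tp_mul {G} (u v : IWord G) : IWord G :=
  {| iL := (iL u + iL v)%type;
     ilt := fun a b => match a, b with
                       | inl x, inl y => ilt u x y
                       | inl _, inr _ => True
                       | inr _, inl _ => False
                       | inr x, inr y => ilt v x y end;
     iw := fun a => match a with inl x => iw u x | inr y => iw v y end |}.

Definition tp_inv {G} (u : IWord G) : IWord G :=
  {| iL := iL u;
     ilt := fun a b => ilt u b a;
     iw := fun x => let (n, g) := iw u x in existT _ n (ginv (G n) g) |}.

Definition finite_word {G} (u : IWord G) : Prop :=
  exists l : list (iL u), forall x, In x l.

(** Normal closure in the topologist's product of (the classes of) the finite words. *)
Inductive NC {G} : IWord G -> Prop :=
| NC_fin : forall u, iw_wf u -> finite_word u -> NC u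
| NC_eq : forall u v, NC u -> iw_wf v -> tp_eq u v -> NC v
| NC_mul : forall u v, NC u -> NC v -> NC (tp_mul u v)
| NC_inv : forall u, NC u -> NC (tp_inv u)
| NC_conj : forall u g, NC u -> iw_wf g -> NC (tp_mul (tp_mul g u) (tp_inv g)).

Definition arch_eq {G} (u v : IWord G) : Prop := NC (tp_mul u (tp_inv v)).

Definition arch_iso (G H : nat -> GrpOps) : Prop :=
  exists f : IWord G -> IWord H,
    (forall u, iw_wf u -> iw_wf (f u)) /\
    (forall u v, iw_wf u -> iw_wf v -> (arch_eq u v <-> arch_eq (f u) (f v))) /\
    (forall u v, iw_wf u -> iw_wf v ->
        arch_eq (f (tp_mul u v)) (tp_mul (f u) (f v))) /\
    (forall v, iw_wf v -> exists u, iw_wf u /\ arch_eq (f u) v).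

Definition block_prod (G : nat -> GrpOps) (P : nat -> nat -> Prop) (n : nat) : GrpOps :=
  FreeProduct {i : nat | P n i} (fun i => G (proj1_sig i)).

From Stdlib Require Import List Arith Lia Relations Sorting.Sorted Classical ClassicalEpsilon ProofIrrelevance Eqdep_dec Cantor.
Import ListNotations.

(* A letter of G_i with i in the block P_n becomes the one-letter word of the
   factor *_{i in P_n} G_i, and letters of G_i with i in A are dropped; back,
   a letter of a block is spelled out as its nontrivial letters.  Both letter
   substitutions send letters of high enough level to letters of level at
   least m, so on level-m restrictions they act as homomorphisms of finite
   free products.  Hence they respect the equivalence of infinite words and
   the normal closure of the finite words.  Blocking after spelling out is the
   identity on restrictions; spelling out after blocking deletes the finitely
   many letters from A, and deleting one letter p from u = a p b changes u by
   the conjugate a p a^-1 of a finite word. *)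

Section FreeProduct.
Variables (I : Type) (F : I -> GrpOps).
Notation fp_eq := (fp_eq I F).

Lemma fp_eq_refl w : fp_eq w w. Proof. apply rst_refl. Qed.
Lemma fp_eq_sym w w' : fp_eq w w' -> fp_eq w' w. Proof. apply rst_sym. Qed.
Lemma fp_eq_trans w1 w2 w3 : fp_eq w1 w2 -> fp_eq w2 w3 -> fp_eq w1 w3.
Proof. apply rst_trans. Qed.

Lemma fp_step_ctx w w' a b : fp_step I F w w' -> fp_step I F (a ++ w ++ b) (a ++ w' ++ b).
Proof.
  intros [w0 w1 i g h|w0 w1 i g Hg|w0 w1 i g h Hg];
  [pose proof (fp_merge I F (a ++ w0) (w1 ++ b) i g h) as Hs
  |pose proof (fp_del I F (a ++ w0) (w1 ++ b) i g Hg) as Hs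
  |pose proof (fp_repl I F (a ++ w0) (w1 ++ b) i g h Hg) as Hs];
  rewrite <- !app_assoc in *; exact Hs.
Qed.

Lemma fp_eq_ctx w w' a b : fp_eq w w' -> fp_eq (a ++ w ++ b) (a ++ w' ++ b).
Proof.
  induction 1.
  - apply rst_step, fp_step_ctx; assumption.
  - apply fp_eq_refl.
  - apply fp_eq_sym; assumption.
  - eapply fp_eq_trans; eassumption.
Qed.

Lemma fp_eq_app w1 w1' w2 w2' : fp_eq w1 w1' -> fp_eq w2 w2' -> fp_eq (w1 ++ w2) (w1' ++ w2').
Proof.
  intros H1 H2. apply fp_eq_trans with (w1' ++ w2).
  - exact (fp_eq_ctx w1 w1' [] w2 H1).
  - pose proof (fp_eq_ctx w2 w2' w1' [] H2) as H; rewrite !app_nil_r in H; exact H.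
Qed.

Lemma fp_eq_merge1 i g h : fp_eq [existT _ i g; existT _ i h] [existT _ i (gmul (F i) g h)].
Proof. apply rst_step, (fp_merge I F [] []). Qed.
Lemma fp_eq_del1 i g : geq (F i) g (gone (F i)) -> fp_eq [existT _ i g] [].
Proof. intros H. apply rst_step, (fp_del I F [] [] i g H). Qed.
Lemma fp_eq_repl1 i g h : geq (F i) g h -> fp_eq [existT _ i g] [existT _ i h].
Proof. intros H. apply rst_step, (fp_repl I F [] [] i g h H). Qed.

Lemma fp_eq_flat_map {A} (f g : A -> list (fletter I F)) l :
  (forall x, fp_eq (f x) (g x)) -> fp_eq (flat_map f l) (flat_map g l).
Proof. intros H; induction l; simpl; [apply fp_eq_refl | apply fp_eq_app; auto]. Qed.

Definition fp_inv (w : list (fletter I F)) := rev (map (fletter_inv I F) w).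

Lemma fp_inv_app a b : fp_inv (a ++ b) = fp_inv b ++ fp_inv a.
Proof. unfold fp_inv. rewrite map_app, rev_app_distr. reflexivity. Qed.

Lemma fp_inv_cons x w : fp_inv (x :: w) = fp_inv w ++ [fletter_inv I F x].
Proof. reflexivity. Qed.

Lemma fp_inv_flat_map {T} (f : T -> list (fletter I F)) l :
  fp_inv (flat_map f l) = flat_map (fun x => fp_inv (f x)) (rev l).
Proof.
  induction l as [|x l IH]; simpl; [reflexivity|].
  rewrite fp_inv_app, IH, flat_map_app; simpl. rewrite app_nil_r. reflexivity.
Qed.
End FreeProduct.

Section FreeProductMap.
Variables (I J : Type) (F : I -> GrpOps) (F' : J -> GrpOps).
Variable th : fletter I F -> list (fletter J F').
Hypothesis th_merge : forall i g h,
  fp_eq J F' (th (existT _ i (gmul (F i) g h))) (th (existT _ i g) ++ th (existT _ i h)).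
Hypothesis th_del : forall i g, geq (F i) g (gone (F i)) -> fp_eq J F' (th (existT _ i g)) [].
Hypothesis th_repl : forall i g h, geq (F i) g h ->
  fp_eq J F' (th (existT _ i g)) (th (existT _ i h)).

Lemma fp_eq_flat_map_hom w w' : fp_eq I F w w' -> fp_eq J F' (flat_map th w) (flat_map th w').
Proof.
  induction 1 as [w w' Hs| | |].
  - destruct Hs as [w0 w1 i g h|w0 w1 i g Hg|w0 w1 i g h Hg]; rewrite !flat_map_app; simpl;
      apply fp_eq_app; try apply fp_eq_refl.
    + rewrite app_assoc. apply fp_eq_app; [apply fp_eq_sym, th_merge | apply fp_eq_refl].
    + apply (fp_eq_app _ _ _ [] _ _ (th_del i g Hg) (fp_eq_refl _ _ _)).
    + apply fp_eq_app; [apply th_repl, Hg | apply fp_eq_refl].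
  - apply fp_eq_refl.
  - apply fp_eq_sym; assumption.
  - eapply fp_eq_trans; eassumption.
Qed.
End FreeProductMap.

(* The laws of inversion used by the word calculus, required only up to
   [geq] so that they also hold in free products. *)
Record inverse_laws (K : GrpOps) : Prop := {
  inv_mul_geq : forall g h, geq K (gmul K (ginv K h) (ginv K g)) (ginv K (gmul K g h));
  inv_geq : forall g h, geq K g h -> geq K (ginv K g) (ginv K h);
  inv_one_geq : forall g, geq K g (gone K) -> geq K (ginv K g) (gone K);
  inv_one_geq_rev : forall g, geq K (ginv K g) (gone K) -> geq K g (gone K);
  mul_inv_geq : forall g, geq K (gmul K g (ginv K g)) (gone K);
  inv_inv_geq : forall g, geq K (ginv K (ginv K g)) g }.

Section FreeProductInverse.
Variables (I : Type) (F : I -> GrpOps).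
Hypothesis HF : forall i, inverse_laws (F i).
Notation fp_eq := (fp_eq I F).
Notation fp_inv := (fp_inv I F).

Lemma fp_eq_inv w w' : fp_eq w w' -> fp_eq (fp_inv w) (fp_inv w').
Proof.
  induction 1 as [w w' Hs| | |].
  - destruct Hs as [w0 w1 i g h|w0 w1 i g Hg|w0 w1 i g h Hg];
      rewrite !fp_inv_app, !fp_inv_cons; simpl; rewrite <- !app_assoc; simpl.
    + refine (fp_eq_ctx I F [_; _] [_] _ _ _). eapply fp_eq_trans; [apply fp_eq_merge1 | apply fp_eq_repl1, inv_mul_geq, HF].
    + refine (fp_eq_ctx I F [_] [] _ _ _). apply fp_eq_del1, inv_one_geq; auto.
    + refine (fp_eq_ctx I F [_] [_] _ _ _). apply fp_eq_repl1, inv_geq; auto.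
  - apply fp_eq_refl.
  - apply fp_eq_sym; assumption.
  - eapply fp_eq_trans; eassumption.
Qed.

Lemma fp_eq_mul_inv w : fp_eq (w ++ fp_inv w) [].
Proof.
  induction w as [|[i g] w IH]; simpl; [apply fp_eq_refl|].
  apply fp_eq_trans with ([existT _ i g] ++ [] ++ [fletter_inv I F (existT _ i g)]).
  - rewrite fp_inv_cons, app_assoc. exact (fp_eq_ctx I F _ _ [_] _ IH).
  - eapply fp_eq_trans; [apply fp_eq_merge1 | apply fp_eq_del1, mul_inv_geq, HF].
Qed.

Lemma fp_eq_inv_inv w : fp_eq (fp_inv (fp_inv w)) w.
Proof.
  induction w as [|[i g] w IH]; simpl; [apply fp_eq_refl|].
  rewrite fp_inv_cons, fp_inv_app. apply (fp_eq_app I F [_] [_]); [apply fp_eq_repl1, inv_inv_geq, HF | exact IH].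
Qed.

Lemma fp_eq_inv_mul w : fp_eq (fp_inv w ++ w) [].
Proof.
  eapply fp_eq_trans; [apply fp_eq_app; [apply fp_eq_refl | apply fp_eq_sym, fp_eq_inv_inv]|].
  apply fp_eq_mul_inv.
Qed.

Lemma free_product_inverse_laws : inverse_laws (FreeProduct I F).
Proof.
  split; simpl; intros.
  - change (fp_eq (fp_inv h ++ fp_inv g) (fp_inv (g ++ h))). rewrite fp_inv_app. apply fp_eq_refl.
  - apply fp_eq_inv; assumption.
  - apply (fp_eq_inv _ _ H).
  - eapply fp_eq_trans; [apply fp_eq_sym, fp_eq_inv_inv | apply (fp_eq_inv _ _ H)].
  - apply fp_eq_mul_inv.
  - apply fp_eq_inv_inv.
Qed.
End FreeProductInverse.

Section GroupFacts.
Variable K : GrpOps.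
Hypothesis HK : is_group K.

Lemma group_geq x y : geq K x y <-> x = y. Proof. apply HK. Qed.

Lemma group_mul_cancel_l a x y : gmul K a x = gmul K a y -> x = y.
Proof.
  destruct HK as (_&As&L1&_&Li&_). intros H.
  rewrite <- (L1 x), <- (L1 y), <- (Li a), <- !As, H. reflexivity.
Qed.

Lemma group_inv_inv x : ginv K (ginv K x) = x.
Proof.
  destruct HK as (_&_&_&_&Li&Ri). apply (group_mul_cancel_l (ginv K x)). rewrite Li, Ri. reflexivity.
Qed.

Lemma group_inv_mul g h : gmul K (ginv K h) (ginv K g) = ginv K (gmul K g h).
Proof.
  destruct HK as (_&As&_&R1&_&Ri). apply (group_mul_cancel_l (gmul K g h)).
  rewrite Ri, As, <- (As g h), Ri, R1, Ri. reflexivity.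
Qed.

Lemma group_inv_one : ginv K (gone K) = gone K.
Proof. destruct HK as (_&_&L1&_&_&Ri). rewrite <- (L1 (ginv K _)), Ri. reflexivity. Qed.

Lemma group_inverse_laws : inverse_laws K.
Proof.
  pose proof HK as (Eq&_&_&_&_&Ri).
  split; intros; rewrite ?Eq in *; subst.
  - apply group_inv_mul.
  - reflexivity.
  - apply group_inv_one.
  - rewrite <- (group_inv_inv g), H. apply group_inv_one.
  - apply Ri.
  - apply group_inv_inv.
Qed.
End GroupFacts.

Lemma flat_map_ext_in {A B} (f g : A -> list B) l :
  (forall x, In x l -> f x = g x) -> flat_map f l = flat_map g l.
Proof. induction l as [|a l IH]; simpl; intros H; [reflexivity|]. rewrite H, IH; auto. Qed.

Lemma flat_map_flat_map {A B C} (f : A -> list B) (g : B -> list C) l :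
  flat_map g (flat_map f l) = flat_map (fun x => flat_map g (f x)) l.
Proof. induction l as [|a l IH]; simpl; [reflexivity|]. rewrite flat_map_app, IH. reflexivity. Qed.

Lemma flat_map_map {A B C} (f : B -> list C) (g : A -> B) l :
  flat_map f (map g l) = flat_map (fun x => f (g x)) l.
Proof. induction l as [|a l IH]; simpl; [reflexivity|]. rewrite IH. reflexivity. Qed.

Lemma StronglySorted_app {T} (R : T -> T -> Prop) l1 l2 : StronglySorted R l1 -> StronglySorted R l2 ->
  (forall a b, In a l1 -> In b l2 -> R a b) -> StronglySorted R (l1 ++ l2).
Proof.
  induction l1 as [|x l1 IH]; simpl; intros H1 H2 H; auto.
  inversion H1; subst. constructor; [apply IH; auto|].
  apply Forall_app; split; auto. apply Forall_forall; intros; apply H; auto.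
Qed.

Lemma StronglySorted_map {T S} (R : T -> T -> Prop) (R' : S -> S -> Prop) (f : T -> S) l :
  (forall a b, R a b -> R' (f a) (f b)) -> StronglySorted R l -> StronglySorted R' (map f l).
Proof.
  intros H. induction 1; simpl; constructor; auto.
  apply Forall_forall; intros y Hy. apply in_map_iff in Hy as (z & <- & Hz).
  apply H. eapply Forall_forall; eauto.
Qed.

Lemma StronglySorted_rev {T} (R : T -> T -> Prop) l : StronglySorted R l -> StronglySorted (fun a b => R b a) (rev l).
Proof.
  induction 1; simpl; [constructor|].
  apply StronglySorted_app; auto; [repeat constructor|].
  intros u v Hu [<-|[]]. apply in_rev in Hu. eapply Forall_forall; eauto.
Qed.

Section StronglySortedFacts.
Variables (T : Type) (R : T -> T -> Prop).
Hypothesis R_irrefl : forall x, ~ R x x.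
Hypothesis R_trans : forall x y z, R x y -> R y z -> R x z.

Lemma StronglySorted_insert l x : StronglySorted R l -> (forall y, R x y \/ x = y \/ R y x) ->
  exists l', StronglySorted R l' /\ forall y, In y l' <-> y = x \/ In y l.
Proof.
  intros Hl Htot. induction Hl as [|z l Hl IH Hz].
  - exists [x]. split; [repeat constructor | simpl; intuition].
  - destruct (Htot z) as [Hxz|[<-|Hzx]].
    + exists (x :: z :: l). split; [|simpl; intuition].
      constructor; [constructor; auto|]. constructor; auto.
      apply Forall_forall; intros y Hy. apply R_trans with z; auto. eapply Forall_forall; eauto.
    + exists (x :: l). split; [constructor; auto|].
      intros y; simpl; split; [tauto | intros [->|[->|?]]; auto].
    + destruct IH as (l' & Hs & Hm). exists (z :: l'). split.
      * constructor; auto. apply Forall_forall; intros y Hy. apply Hm in Hy as [->|Hy]; auto.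
        eapply Forall_forall; eauto.
      * intros y; simpl; rewrite Hm. intuition.
Qed.

Lemma StronglySorted_sort (L : list T) : (forall x y, R x y \/ x = y \/ R y x) ->
  exists l, StronglySorted R l /\ forall y, In y l <-> In y L.
Proof.
  intros Htot. induction L as [|x L IH].
  - exists []; split; [constructor | simpl; tauto].
  - destruct IH as (l & Hs & Hm). destruct (StronglySorted_insert l x Hs (Htot x)) as (l' & Hs' & Hm').
    exists l'; split; auto. intros y; rewrite Hm'; simpl; rewrite Hm.
    split; intros [->|?]; auto.
Qed.

Lemma StronglySorted_In_ordered x y l : StronglySorted R (x :: l) -> In y l -> y <> x.
Proof.
  intros Hs Hy ->. inversion Hs as [|? ? _ Hf]; subst.
  apply (R_irrefl x). eapply Forall_forall; eauto.
Qed.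

Lemma flat_map_StronglySorted_incl {X} (phi : T -> list X) l1 l2 :
  StronglySorted R l1 -> StronglySorted R l2 -> incl l1 l2 ->
  (forall x, In x l2 -> ~ In x l1 -> phi x = []) ->
  flat_map phi l1 = flat_map phi l2.
Proof.
  revert l1. induction l2 as [|y l2 IH]; intros l1 S1 S2 Hi Hn.
  - destruct l1 as [|x l1]; [reflexivity|]. destruct (Hi x (or_introl eq_refl)).
  - destruct (classic (In y l1)) as [Hy|Hy].
    + destruct l1 as [|x l1]; [destruct Hy|].
      assert (x = y) as <-.
      { destruct (Hi x (or_introl eq_refl)) as [->|Hx]; auto.
        destruct Hy as [->|Hy]; auto. exfalso.
        apply (R_irrefl x), R_trans with y.
        - inversion S1; subst. eapply Forall_forall; eauto.
        - inversion S2; subst. eapply Forall_forall; eauto. }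
      simpl. f_equal. apply IH.
      * inversion S1; assumption.
      * inversion S2; assumption.
      * intros z Hz. destruct (Hi z (or_intror Hz)) as [<-|]; auto.
        exfalso. exact (StronglySorted_In_ordered _ _ _ S1 Hz eq_refl).
      * intros z Hz Hz'. apply Hn; [now right|]. intros [<-|]; [|tauto].
        exact (StronglySorted_In_ordered _ _ _ S2 Hz eq_refl).
    + simpl. rewrite (Hn y (or_introl eq_refl) Hy). apply IH.
      * assumption.
      * inversion S2; assumption.
      * intros z Hz. destruct (Hi z Hz) as [<-|]; tauto.
      * intros z Hz Hz'. apply Hn; simpl; auto.
Qed.
End StronglySortedFacts.

Notation fp_first_eq G m := (fp_eq {i : nat | i < m} (fun i => G (proj1_sig i))).
Notation fp_first_inv G m := (fp_inv {i : nat | i < m} (fun i => G (proj1_sig i))).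

Definition letter_inv {G : nat -> GrpOps} (a : Letter G) : Letter G :=
  let (n, g) := a in existT _ n (ginv (G n) g).

Lemma restr_letter_ge {G} m (a : Letter G) : m <= projT1 a -> restr_letter m a = [].
Proof. destruct a as [n g]; simpl; intros. destruct (Compare_dec.lt_dec n m); [lia | reflexivity]. Qed.

Section InfiniteWords.
Variable G : nat -> GrpOps.
Implicit Types u v : IWord G.

Section WellFormed.
Variables (u : IWord G) (Wu : iw_wf u).

Lemma iw_wf_irrefl x : ~ ilt u x x. Proof. apply Wu. Qed.
Lemma iw_wf_trans x y z : ilt u x y -> ilt u y z -> ilt u x z. Proof. apply Wu. Qed.
Lemma iw_wf_total x y : ilt u x y \/ x = y \/ ilt u y x. Proof. apply Wu. Qed.
Lemma iw_wf_countable : exists f : iL u -> nat, forall x y, f x = f y -> x = y. Proof. apply Wu. Qed.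
Lemma iw_wf_finite n : exists l, forall x, projT1 (iw u x) = n -> In x l. Proof. apply Wu. Qed.
Lemma iw_wf_nontrivial x : ~ geq (G (projT1 (iw u x))) (projT2 (iw u x)) (gone _). Proof. apply Wu. Qed.

Lemma iw_wf_finite_below m : exists l, forall x, projT1 (iw u x) < m -> In x l.
Proof.
  induction m as [|m [l Hl]]; [exists []; intros; lia|].
  destruct (iw_wf_finite m) as [l' Hl']. exists (l ++ l'). intros x Hx. apply in_app_iff.
  destruct (Nat.eq_dec (projT1 (iw u x)) m); [right | left; apply Hl; lia]; auto.
Qed.

Lemma restr_enum_exists m : exists l, restr_enum u m l.
Proof.
  destruct iw_wf_finite_below with m as [L HL].
  destruct (StronglySorted_sort _ (ilt u) iw_wf_trans
              (filter (fun x => projT1 (iw u x) <? m) L) iw_wf_total) as (l & Hs & Hm).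
  exists l; split; auto. intros x. rewrite Hm, filter_In, Nat.ltb_lt. intuition.
Qed.
End WellFormed.

Definition restr_list u m := epsilon (inhabits (@nil (iL u))) (restr_enum u m).

(* All enumerations give the same word ([restr_word_restr]); [epsilon] fixes one. *)
Definition restr u m := restr_word u m (restr_list u m).

Lemma restr_list_spec u m : iw_wf u -> restr_enum u m (restr_list u m).
Proof. intros W. unfold restr_list. apply epsilon_spec, (restr_enum_exists u W). Qed.

Lemma restr_word_restr u m l : iw_wf u -> restr_enum u m l -> restr_word u m l = restr u m.
Proof.
  intros W [S1 M1]. destruct (restr_list_spec u m W) as [S2 M2].
  apply (flat_map_StronglySorted_incl _ (ilt u) (iw_wf_irrefl u W) (iw_wf_trans u W)); auto.
  - intros x Hx; apply M2, M1, Hx.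
  - intros x Hx Hx'. exfalso; apply Hx', M1, M2, Hx.
Qed.

Definition restr_eq u v := forall m, fp_first_eq G m (restr u m) (restr v m).

Lemma tp_eq_restr_eq u v : iw_wf u -> iw_wf v -> tp_eq u v <-> restr_eq u v.
Proof.
  intros Wu Wv; split.
  - intros H m. apply H; apply restr_list_spec; assumption.
  - intros H m l1 l2 H1 H2. rewrite (restr_word_restr u m l1), (restr_word_restr v m l2); auto.
    apply H.
Qed.

Lemma restr_eq_refl u : restr_eq u u. Proof. intros m; apply fp_eq_refl. Qed.
Lemma restr_eq_sym u v : restr_eq u v -> restr_eq v u. Proof. intros H m; apply fp_eq_sym, H. Qed.
Lemma restr_eq_trans u v w : restr_eq u v -> restr_eq v w -> restr_eq u w.
Proof. intros H H' m; eapply fp_eq_trans; [apply H | apply H']. Qed.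

Lemma restr_le v m m' : iw_wf v -> m <= m' ->
  restr v m = flat_map (fun a => restr_letter m (existT (fun n => gcar (G n)) (proj1_sig (projT1 a)) (projT2 a))) (restr v m').
Proof.
  intros W Hm. destruct (restr_list_spec v m W) as [S1 M1]. destruct (restr_list_spec v m' W) as [S2 M2].
  unfold restr, restr_word. rewrite flat_map_flat_map.
  rewrite (flat_map_StronglySorted_incl _ (ilt v) (iw_wf_irrefl v W) (iw_wf_trans v W) _
             (restr_list v m) (restr_list v m')); auto.
  - apply flat_map_ext_in. intros x Hx. apply M2 in Hx. destruct (iw v x) as [n g]; simpl in *.
    destruct (Compare_dec.lt_dec n m'); [|lia]. simpl. rewrite app_nil_r. reflexivity.
  - intros x Hx. apply M2. apply M1 in Hx. lia.
  - intros x _ Hx. apply restr_letter_ge. apply Nat.nlt_ge. intros H; apply Hx, M1, H.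
Qed.

Lemma tp_mul_wf u v : iw_wf u -> iw_wf v -> iw_wf (tp_mul u v).
Proof.
  intros Wu Wv. split; [|split; [|split; [|split; [|split]]]].
  - intros [x|x]; simpl; apply iw_wf_irrefl; assumption.
  - intros [x|x] [y|y] [z|z]; simpl; try tauto; apply iw_wf_trans; assumption.
  - intros [x|x] [y|y]; simpl; auto.
    + destruct (iw_wf_total u Wu x y) as [?|[->|?]]; auto.
    + destruct (iw_wf_total v Wv x y) as [?|[->|?]]; auto.
  - destruct (iw_wf_countable u Wu) as [f Hf], (iw_wf_countable v Wv) as [g Hg].
    exists (fun a => match a with inl x => 2 * f x | inr y => 2 * g y + 1 end).
    intros [x|x] [y|y] E; try lia; f_equal; [apply Hf | apply Hg]; lia.
  - intros n. destruct (iw_wf_finite u Wu n) as [l1 H1], (iw_wf_finite v Wv n) as [l2 H2].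
    exists (map inl l1 ++ map inr l2). intros [x|x] Hx; apply in_app_iff; [left|right]; apply in_map; auto.
  - intros [x|x]; simpl; apply iw_wf_nontrivial; assumption.
Qed.

Lemma restr_tp_mul u v m : iw_wf u -> iw_wf v -> restr (tp_mul u v) m = restr u m ++ restr v m.
Proof.
  intros Wu Wv. destruct (restr_list_spec u m Wu) as [S1 M1], (restr_list_spec v m Wv) as [S2 M2].
  rewrite <- (restr_word_restr (tp_mul u v) m (map inl (restr_list u m) ++ map inr (restr_list v m))).
  - unfold restr_word, restr. rewrite flat_map_app, !flat_map_map. reflexivity.
  - apply tp_mul_wf; assumption.
  - split.
    + apply StronglySorted_app; [apply (StronglySorted_map (ilt u)) | apply (StronglySorted_map (ilt v)) |]; auto.
      intros a b Ha Hb. apply in_map_iff in Ha as (? & <- & _). apply in_map_iff in Hb as (? & <- & _). exact I.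
    + intros [x|x]; rewrite in_app_iff, !in_map_iff; simpl; [rewrite <- M1 | rewrite <- M2]; split.
      1,3: intros [(y & E & Hy)|(y & E & Hy)]; inversion E; subst; assumption.
      * intros H; left; exists x; auto.
      * intros H; right; exists x; auto.
Qed.

Lemma restr_letter_inv m (a : Letter G) :
  restr_letter m (letter_inv a) = fp_first_inv G m (restr_letter m a).
Proof. destruct a as [n g]; simpl. destruct (Compare_dec.lt_dec n m); reflexivity. Qed.

Section Inverse.
Hypothesis HG : forall n, inverse_laws (G n).

Lemma tp_inv_letter u x : projT1 (iw (tp_inv u) x) = projT1 (iw u x).
Proof. simpl. destruct (iw u x); reflexivity. Qed.

Lemma tp_inv_wf u : iw_wf u -> iw_wf (tp_inv u).
Proof.
  intros Wu. split; [|split; [|split; [|split; [|split]]]]; simpl.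
  - apply iw_wf_irrefl; assumption.
  - intros x y z H1 H2; eapply iw_wf_trans; eauto.
  - intros x y. destruct (iw_wf_total u Wu x y) as [?|[->|?]]; auto.
  - apply iw_wf_countable; assumption.
  - intros n. destruct (iw_wf_finite u Wu n) as [l Hl]. exists l. intros x Hx. apply Hl.
    rewrite <- Hx. symmetry; apply tp_inv_letter.
  - intros x. pose proof (iw_wf_nontrivial u Wu x) as Hx. destruct (iw u x) as [n g]; simpl in *.
    intros Hc; apply Hx, (inv_one_geq_rev _ (HG n)), Hc.
Qed.

Lemma restr_tp_inv u m : iw_wf u -> restr (tp_inv u) m = fp_first_inv G m (restr u m).
Proof.
  intros Wu. destruct (restr_list_spec u m Wu) as [S1 M1].
  rewrite <- (restr_word_restr (tp_inv u) m (rev (restr_list u m))).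
  - unfold restr, restr_word at 2. rewrite fp_inv_flat_map. apply flat_map_ext. intros x. apply restr_letter_inv.
  - apply tp_inv_wf; assumption.
  - split; [apply (StronglySorted_rev (ilt u)); assumption|].
    intros x. rewrite <- in_rev, M1, tp_inv_letter. reflexivity.
Qed.
End Inverse.

Definition word_iso u v : Prop :=
  exists phi : iL u -> iL v, (forall x y, ilt u x y <-> ilt v (phi x) (phi y)) /\
    (forall y, exists x, phi x = y) /\ (forall x, iw v (phi x) = iw u x).

Lemma restr_word_iso u v m : iw_wf u -> iw_wf v -> word_iso u v -> restr u m = restr v m.
Proof.
  intros Wu Wv (phi & Ho & Hs & Hw). destruct (restr_list_spec u m Wu) as [S1 M1].
  rewrite <- (restr_word_restr v m (map phi (restr_list u m))); auto.
  - unfold restr_word, restr. rewrite flat_map_concat_map, map_map, <- flat_map_concat_map.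
    apply flat_map_ext. intros x; rewrite Hw; reflexivity.
  - split.
    + apply (StronglySorted_map (ilt u)); auto. intros; apply Ho; assumption.
    + intros y. rewrite in_map_iff. split.
      * intros (x & <- & Hx). rewrite Hw. apply M1, Hx.
      * intros H. destruct (Hs y) as [x <-]. exists x; split; auto. apply M1. rewrite <- Hw; assumption.
Qed.
End InfiniteWords.

Section ArchipelagoEquality.
Variable G : nat -> GrpOps.
Hypothesis HG : forall n, inverse_laws (G n).
Implicit Types u v w : IWord G.

Let HGm m : forall i : {i | i < m}, inverse_laws (G (proj1_sig i)).
Proof. intros; apply HG. Qed.

Lemma NC_wf u : NC u -> iw_wf u.
Proof.
  induction 1; auto using tp_mul_wf, tp_inv_wf.
Qed.

Lemma NC_restr_eq u v : NC u -> iw_wf v -> restr_eq G u v -> NC v.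
Proof.
  intros H Wv E. apply (NC_eq u v H Wv). apply tp_eq_restr_eq; auto using NC_wf.
Qed.

Definition empty_word : IWord G :=
  {| iL := Empty_set; ilt := fun _ _ => False; iw := fun x : Empty_set => match x with end |}.

Lemma empty_word_wf : iw_wf empty_word.
Proof.
  split; [|split; [|split; [|split; [|split]]]].
  1-3, 6: intros [].
  - exists (fun x : Empty_set => match x with end). intros [].
  - intros n; exists []; intros [].
Qed.

Lemma NC_restr_nil u : iw_wf u -> (forall m, fp_first_eq G m (restr G u m) []) -> NC u.
Proof.
  intros W H. apply (NC_restr_eq empty_word); auto.
  - apply NC_fin; [apply empty_word_wf | exists []; intros []].
  - intros m. rewrite <- (restr_word_restr G empty_word m []); [|apply empty_word_wf|].
    + apply fp_eq_sym, H.
    + split; [constructor | intros []].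
Qed.

Lemma tp_div_wf u v : iw_wf u -> iw_wf v -> iw_wf (tp_mul u (tp_inv v)).
Proof. auto using tp_mul_wf, tp_inv_wf. Qed.

Lemma restr_tp_div u v m : iw_wf u -> iw_wf v ->
  restr G (tp_mul u (tp_inv v)) m = restr G u m ++ fp_first_inv G m (restr G v m).
Proof. intros Wu Wv. rewrite restr_tp_mul, restr_tp_inv; auto using tp_inv_wf. Qed.

Lemma arch_eq_refl u : iw_wf u -> arch_eq u u.
Proof.
  intros W. apply NC_restr_nil; [apply tp_div_wf; assumption|].
  intros m. rewrite restr_tp_div; auto. apply fp_eq_mul_inv, HGm.
Qed.

Lemma arch_eq_restr_eq u v u' v' : iw_wf u -> iw_wf v -> iw_wf u' -> iw_wf v' ->
  restr_eq G u u' -> restr_eq G v v' -> arch_eq u v -> arch_eq u' v'.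
Proof.
  intros Wu Wv Wu' Wv' Eu Ev H. apply (NC_restr_eq _ _ H); [apply tp_div_wf; assumption|].
  intros m. rewrite !restr_tp_div; auto. apply fp_eq_app; [apply Eu | apply fp_eq_inv, Ev; apply HGm].
Qed.

Lemma restr_eq_arch_eq u v : iw_wf u -> iw_wf v -> restr_eq G u v -> arch_eq u v.
Proof.
  intros Wu Wv E. apply (arch_eq_restr_eq u u); auto using restr_eq_refl, arch_eq_refl.
Qed.

Lemma arch_eq_sym u v : iw_wf u -> iw_wf v -> arch_eq u v -> arch_eq v u.
Proof.
  intros Wu Wv H. apply NC_inv in H. apply (NC_restr_eq _ _ H); [apply tp_div_wf; assumption|].
  intros m. rewrite restr_tp_inv, !restr_tp_div, fp_inv_app; auto using tp_div_wf.
  apply fp_eq_app; [apply fp_eq_inv_inv, HGm | apply fp_eq_refl].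
Qed.

Lemma arch_eq_trans u v w : iw_wf u -> iw_wf v -> iw_wf w ->
  arch_eq u v -> arch_eq v w -> arch_eq u w.
Proof.
  intros Wu Wv Ww H1 H2. apply (NC_restr_eq _ _ (NC_mul _ _ H1 H2)); [apply tp_div_wf; assumption|].
  intros m. rewrite restr_tp_mul, !restr_tp_div; auto using tp_div_wf.
  rewrite <- !app_assoc. apply fp_eq_app; [apply fp_eq_refl|].
  rewrite app_assoc. apply (fp_eq_app _ _ _ [] _ _); [apply fp_eq_inv_mul, HGm | apply fp_eq_refl].
Qed.
End ArchipelagoEquality.

Lemma sig_eq {T} {Q : T -> Prop} (a b : {x | Q x}) : proj1_sig a = proj1_sig b -> a = b.
Proof. apply eq_sig_hprop. intros; apply proof_irrelevance. Qed.

Lemma sig_list_cover {T} (Q : T -> Prop) (l : list T) :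
  exists ls : list {x | Q x}, forall s, In (proj1_sig s) l -> In s ls.
Proof.
  induction l as [|x l [ls H]]; [exists []; simpl; tauto|].
  destruct (classic (Q x)) as [q|nq].
  - exists (exist _ x q :: ls). intros s [E|Hs]; [left; apply sig_eq; auto | right; auto].
  - exists ls. intros s [E|Hs]; auto. exfalso; apply nq; rewrite E; apply proj2_sig.
Qed.

Lemma firstn_S_nth {A} (l : list A) n d : n < length l -> firstn (S n) l = firstn n l ++ [nth n l d].
Proof. revert n; induction l; intros [|n] H; simpl in *; try lia; auto. rewrite IHl by lia. reflexivity. Qed.

Section LetterSubstitution.
Variables (G H : nat -> GrpOps) (th : Letter G -> list (Letter H)).

Definition dummy_letter : Letter H := existT _ 0 (gone (H 0)).

Definition iw_subst (u : IWord G) : IWord H :=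
 {| iL := {p : iL u * nat | snd p < length (th (iw u (fst p)))};
    ilt := fun a b => ilt u (fst (proj1_sig a)) (fst (proj1_sig b)) \/
                      (fst (proj1_sig a) = fst (proj1_sig b) /\ snd (proj1_sig a) < snd (proj1_sig b));
    iw := fun a => nth (snd (proj1_sig a)) (th (iw u (fst (proj1_sig a)))) dummy_letter |}.

Definition th_restr m (a : Letter G) := flat_map (restr_letter m) (th a).

Hypothesis th_level : forall m, exists k, forall a, k <= projT1 a -> forall b, In b (th a) -> m <= projT1 b.
Hypothesis th_nontrivial : forall a, ~ geq (G (projT1 a)) (projT2 a) (gone _) ->
  forall b, In b (th a) -> ~ geq (H (projT1 b)) (projT2 b) (gone _).

Lemma iw_subst_letter_in u (p : iL (iw_subst u)) : In (iw (iw_subst u) p) (th (iw u (fst (proj1_sig p)))).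
Proof. destruct p as [[x j] h]; simpl in *. apply nth_In; assumption. Qed.

Lemma iw_subst_positions_cover u (l : list (iL u)) :
  exists lp, forall p : iL (iw_subst u), In (fst (proj1_sig p)) l -> In p lp.
Proof.
  destruct (sig_list_cover (fun p : iL u * nat => snd p < length (th (iw u (fst p))))
      (flat_map (fun x => map (fun j => (x, j)) (seq 0 (length (th (iw u x))))) l)) as [ls Hls].
  exists ls. intros [[x j] h] Hx. apply Hls. simpl in *. apply in_flat_map. exists x. split; auto.
  apply in_map_iff. exists j; split; auto. apply in_seq; lia.
Qed.

Lemma iw_subst_wf u : iw_wf u -> iw_wf (iw_subst u).
Proof.
  intros W. split; [|split; [|split; [|split; [|split]]]].
  - intros [[x j] h]; simpl. intros [Hc|[_ Hc]]; [apply (iw_wf_irrefl G u W x Hc) | lia].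
  - intros [[x j] h] [[y j'] h'] [[z j''] h'']; simpl. intros [H1|[E1 H1]] [H2|[E2 H2]]; subst.
    + left; eapply iw_wf_trans; eauto.
    + left; assumption.
    + left; assumption.
    + right; split; [reflexivity | lia].
  - intros [[x j] h] [[y j'] h']; simpl. destruct (iw_wf_total G u W x y) as [?|[E|?]]; auto. subst.
    destruct (lt_eq_lt_dec j j') as [[?|E]|?]; auto. subst. right; left; apply sig_eq; reflexivity.
  - destruct (iw_wf_countable G u W) as [f Hf].
    exists (fun p => Cantor.to_nat (f (fst (proj1_sig p)), snd (proj1_sig p))).
    intros [[x j] h] [[y j'] h'] E; cbn [proj1_sig fst snd] in E. apply (f_equal Cantor.of_nat) in E.
    rewrite !Cantor.cancel_of_to in E. injection E; intros. apply sig_eq; simpl. f_equal; auto.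
  - intros n. destruct (th_level (S n)) as [k Hk]. destruct (iw_wf_finite_below G u W k) as [L HL].
    destruct (iw_subst_positions_cover u L) as [lp Hlp]. exists lp. intros p Hp. apply Hlp, HL.
    apply Nat.nle_gt. intros Hkx. pose proof (Hk _ Hkx _ (iw_subst_letter_in u p)). lia.
  - intros p. apply (th_nontrivial (iw u (fst (proj1_sig p)))).
    + apply iw_wf_nontrivial, W.
    + apply iw_subst_letter_in.
Qed.

Lemma iw_subst_finite u : finite_word u -> finite_word (iw_subst u).
Proof.
  intros [l Hl]. destruct (iw_subst_positions_cover u l) as [lp Hlp]. exists lp. intros p. apply Hlp, Hl.
Qed.

Lemma iw_subst_block u m x : exists px : list (iL (iw_subst u)),
  StronglySorted (ilt (iw_subst u)) px /\ (forall p, In p px <-> fst (proj1_sig p) = x) /\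
  flat_map (fun p => restr_letter m (iw (iw_subst u) p)) px = th_restr m (iw u x).
Proof.
  assert (Hn : forall n, n <= length (th (iw u x)) -> exists px : list (iL (iw_subst u)),
    StronglySorted (ilt (iw_subst u)) px /\
    (forall p, In p px <-> fst (proj1_sig p) = x /\ snd (proj1_sig p) < n) /\
    flat_map (fun p => restr_letter m (iw (iw_subst u) p)) px
    = flat_map (restr_letter m) (firstn n (th (iw u x)))).
  { induction n as [|n IH]; intros Hn.
    - exists []. split; [constructor|]. split; [intros p; simpl; lia | reflexivity].
    - destruct (IH ltac:(lia)) as (px & S & M & E).
      pose (pn := exist (fun p : iL u * nat => snd p < length (th (iw u (fst p)))) (x, n) Hn
                  : iL (iw_subst u)).
      exists (px ++ [pn]). split; [|split].
      + apply StronglySorted_app; auto; [repeat constructor|]. intros a b Ha [<-|[]].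
        apply M in Ha as [E1 E2]. simpl. right; split; auto.
      + intros p. rewrite in_app_iff, M. simpl. split.
        * intros [[E1 E2]|[<-|[]]]; simpl; split; auto; lia.
        * intros [E1 E2]. destruct (Nat.eq_dec (snd (proj1_sig p)) n); [right; left|left; split; auto; lia].
          apply sig_eq. simpl. destruct (proj1_sig p); simpl in *; subst; reflexivity.
      + rewrite flat_map_app, E, (firstn_S_nth _ _ dummy_letter), flat_map_app by lia. reflexivity. }
  destruct (Hn (length (th (iw u x))) (le_n _)) as (px & S & M & E).
  exists px. split; [assumption|]. split.
  - intros p; rewrite M. split; [tauto|]. intros E'; split; auto. destruct p as [[y j] h]; simpl in *; subst; auto.
  - rewrite E, firstn_all. reflexivity.
Qed.

Lemma iw_subst_sorted u m l : StronglySorted (ilt u) l -> exists lp : list (iL (iw_subst u)),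
  StronglySorted (ilt (iw_subst u)) lp /\ (forall p, In p lp <-> In (fst (proj1_sig p)) l) /\
  flat_map (fun p => restr_letter m (iw (iw_subst u) p)) lp = flat_map (fun x => th_restr m (iw u x)) l.
Proof.
  induction 1 as [|x l S IH HF].
  - exists []. split; [constructor | split; simpl; tauto].
  - destruct IH as (lp & S' & M' & E'). destruct (iw_subst_block u m x) as (px & S1 & M1 & E1).
    exists (px ++ lp). split; [|split].
    + apply StronglySorted_app; auto. intros a b Ha Hb. apply M1 in Ha. apply M' in Hb. simpl. left.
      rewrite Ha. eapply Forall_forall; eauto.
    + intros p; rewrite in_app_iff, M1, M'. simpl. split; intros [?|?]; auto.
    + rewrite flat_map_app, E1, E'. reflexivity.
Qed.

Lemma restr_iw_subst u m k : iw_wf u ->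
  (forall a, k <= projT1 a -> forall b, In b (th a) -> m <= projT1 b) ->
  restr H (iw_subst u) m = flat_map (fun x => th_restr m (iw u x)) (restr_list G u k).
Proof.
  intros W Hk. destruct (restr_list_spec G u k W) as [S M].
  destruct (iw_subst_sorted u m _ S) as (lp & S' & M' & E').
  pose proof (iw_subst_wf u W) as W'. destruct (restr_list_spec H (iw_subst u) m W') as [S2 M2].
  unfold restr, restr_word. rewrite <- E'.
  apply (flat_map_StronglySorted_incl _ (ilt (iw_subst u)) (iw_wf_irrefl H _ W') (iw_wf_trans H _ W')); auto.
  - intros p Hp. apply M', M. apply M2 in Hp.
    apply Nat.nle_gt. intros Hkx. pose proof (Hk _ Hkx _ (iw_subst_letter_in u p)). lia.
  - intros p _ Hp. apply restr_letter_ge, Nat.nlt_ge. intros Hlt; apply Hp, M2, Hlt.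
Qed.

Definition level_map k m (a : fletter {i | i < k} (fun i => G (proj1_sig i))) :=
  th_restr m (existT _ (proj1_sig (projT1 a)) (projT2 a)).

Lemma restr_iw_subst_level_map u m k : iw_wf u ->
  (forall a, k <= projT1 a -> forall b, In b (th a) -> m <= projT1 b) ->
  restr H (iw_subst u) m = flat_map (level_map k m) (restr G u k).
Proof.
  intros W Hk. rewrite restr_iw_subst with (k := k) by assumption.
  unfold restr, restr_word. rewrite flat_map_flat_map.
  destruct (restr_list_spec G u k W) as [S M].
  apply flat_map_ext_in. intros x Hx. apply M in Hx. destruct (iw u x) as [n g]; simpl in *.
  destruct (Compare_dec.lt_dec n k); [|lia]. simpl. rewrite app_nil_r. reflexivity.
Qed.

Hypothesis HG : forall n, inverse_laws (G n).
Hypothesis HH : forall n, inverse_laws (H n).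
Hypothesis th_merge : forall m n g h, fp_first_eq H m (th_restr m (existT _ n (gmul (G n) g h)))
  (th_restr m (existT _ n g) ++ th_restr m (existT _ n h)).
Hypothesis th_del : forall m n g, geq (G n) g (gone (G n)) -> fp_first_eq H m (th_restr m (existT _ n g)) [].
Hypothesis th_repl : forall m n g h, geq (G n) g h ->
  fp_first_eq H m (th_restr m (existT _ n g)) (th_restr m (existT _ n h)).
Hypothesis th_inv : forall m a, fp_first_eq H m (th_restr m (letter_inv a)) (fp_first_inv H m (th_restr m a)).

Lemma level_map_fp_eq k m w w' : fp_first_eq G k w w' ->
  fp_first_eq H m (flat_map (level_map k m) w) (flat_map (level_map k m) w').
Proof. apply fp_eq_flat_map_hom; intros [i Hi]; simpl; intros; unfold level_map; simpl; auto. Qed.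

Lemma level_map_inv k m w : fp_first_eq H m (flat_map (level_map k m) (fp_first_inv G k w))
  (fp_first_inv H m (flat_map (level_map k m) w)).
Proof.
  rewrite fp_inv_flat_map. unfold fp_inv at 1. rewrite <- map_rev, flat_map_map.
  apply fp_eq_flat_map. intros [[i Hi] g]. exact (th_inv m (existT _ i g)).
Qed.

Lemma iw_subst_restr_eq u v : iw_wf u -> iw_wf v -> restr_eq G u v -> restr_eq H (iw_subst u) (iw_subst v).
Proof.
  intros Wu Wv E m. destruct (th_level m) as [k Hk].
  rewrite !(restr_iw_subst_level_map _ m k) by assumption. apply level_map_fp_eq, E.
Qed.

Lemma iw_subst_tp_mul u v : iw_wf u -> iw_wf v ->
  restr_eq H (iw_subst (tp_mul u v)) (tp_mul (iw_subst u) (iw_subst v)).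
Proof.
  intros Wu Wv m. destruct (th_level m) as [k Hk].
  rewrite restr_tp_mul, !(restr_iw_subst_level_map _ m k), restr_tp_mul, flat_map_app;
    auto using tp_mul_wf, iw_subst_wf.
  apply fp_eq_refl.
Qed.

Lemma iw_subst_tp_inv u : iw_wf u -> restr_eq H (iw_subst (tp_inv u)) (tp_inv (iw_subst u)).
Proof.
  intros Wu m. destruct (th_level m) as [k Hk].
  rewrite restr_tp_inv, !(restr_iw_subst_level_map _ m k), restr_tp_inv; auto using tp_inv_wf, iw_subst_wf.
  apply level_map_inv.
Qed.

Lemma iw_subst_conj g u : iw_wf g -> iw_wf u ->
  restr_eq H (iw_subst (tp_mul (tp_mul g u) (tp_inv g)))
             (tp_mul (tp_mul (iw_subst g) (iw_subst u)) (tp_inv (iw_subst g))).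
Proof.
  intros Wg Wu. eapply restr_eq_trans; [apply iw_subst_tp_mul; auto using tp_mul_wf, tp_inv_wf|].
  intros m. rewrite !restr_tp_mul; auto using tp_mul_wf, tp_inv_wf, iw_subst_wf.
  apply fp_eq_app; [|apply iw_subst_tp_inv; assumption].
  rewrite <- restr_tp_mul by auto using iw_subst_wf. apply iw_subst_tp_mul; assumption.
Qed.

Lemma NC_iw_subst u : NC u -> NC (iw_subst u).
Proof.
  induction 1 as [u W Hf|u v Hu IH Wv E|u v Hu IHu Hv IHv|u Hu IH|u g Hu IH Wg];
    pose proof (NC_wf G HG) as NCW.
  - apply NC_fin; [apply iw_subst_wf | apply iw_subst_finite]; assumption.
  - apply (NC_restr_eq H HH (iw_subst u)); auto using iw_subst_wf.
    apply iw_subst_restr_eq; auto. apply tp_eq_restr_eq; auto.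
  - apply (NC_restr_eq H HH _ _ (NC_mul _ _ IHu IHv)); auto using iw_subst_wf, tp_mul_wf.
    apply restr_eq_sym, iw_subst_tp_mul; auto.
  - apply (NC_restr_eq H HH _ _ (NC_inv _ IH)); auto using iw_subst_wf, tp_inv_wf.
    apply restr_eq_sym, iw_subst_tp_inv; auto.
  - apply (NC_restr_eq H HH _ _ (NC_conj _ _ IH (iw_subst_wf g Wg)));
      auto using iw_subst_wf, tp_mul_wf, tp_inv_wf.
    apply restr_eq_sym, iw_subst_conj; auto.
Qed.

Lemma arch_eq_iw_subst u v : iw_wf u -> iw_wf v -> arch_eq u v -> arch_eq (iw_subst u) (iw_subst v).
Proof.
  intros Wu Wv Hn. apply NC_iw_subst in Hn. apply (NC_restr_eq H HH _ _ Hn).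
  { apply tp_div_wf; auto using iw_subst_wf. }
  eapply restr_eq_trans; [apply iw_subst_tp_mul; auto using tp_inv_wf|].
  intros m. rewrite !restr_tp_mul by auto using iw_subst_wf, tp_inv_wf.
  apply fp_eq_app; [apply fp_eq_refl | apply iw_subst_tp_inv; assumption].
Qed.
End LetterSubstitution.

Section Deletion.
Variable G : nat -> GrpOps.
Hypothesis HG : forall n, inverse_laws (G n).
Implicit Types u v : IWord G.

Definition iw_restrict u (S : iL u -> Prop) : IWord G :=
  {| iL := {x : iL u | S x}; ilt := fun a b => ilt u (proj1_sig a) (proj1_sig b);
     iw := fun a => iw u (proj1_sig a) |}.

Lemma iw_restrict_wf u S : iw_wf u -> iw_wf (iw_restrict u S).
Proof.
  intros W. split; [|split; [|split; [|split; [|split]]]]; simpl.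
  - intros x; apply iw_wf_irrefl; assumption.
  - intros x y z; apply iw_wf_trans; assumption.
  - intros x y. destruct (iw_wf_total G u W (proj1_sig x) (proj1_sig y)) as [?|[E|?]]; auto.
    right; left; apply sig_eq; assumption.
  - destruct (iw_wf_countable G u W) as [f Hf]. exists (fun a => f (proj1_sig a)).
    intros x y E; apply sig_eq; auto.
  - intros n. destruct (iw_wf_finite G u W n) as [l Hl]. destruct (sig_list_cover S l) as [ls Hls].
    exists ls. intros x Hx. apply Hls, Hl, Hx.
  - intros x; apply iw_wf_nontrivial; assumption.
Qed.

Section OnePosition.
Variables (u : IWord G) (Wu : iw_wf u) (p : iL u).
Let before := iw_restrict u (fun x => ilt u x p).
Let at_p := iw_restrict u (fun x => x = p).
Let after := iw_restrict u (fun x => ilt u p x).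

Lemma word_iso_split_at : word_iso G (tp_mul (tp_mul before at_p) after) u.
Proof.
  pose proof (iw_wf_irrefl G u Wu) as Irr. pose proof (iw_wf_trans G u Wu) as Tr.
  exists (fun a => match a with inl (inl x) => proj1_sig x | inl (inr x) => proj1_sig x
                           | inr x => proj1_sig x end).
  split; [|split].
  - intros [[[x hx]|[x hx]]|[x hx]] [[[y hy]|[y hy]]|[y hy]]; simpl; subst; split; intros; try tauto;
      try solve [eapply Tr; eauto]; exfalso;
      try (eapply Irr; eapply Tr; eassumption); try (eapply Irr; eapply Tr; [eapply Tr|]; eassumption); eauto.
  - intros y. destruct (iw_wf_total G u Wu y p) as [h|[h|h]].
    + exists (inl (inl (exist _ y h))); reflexivity.
    + exists (inl (inr (exist _ y h))); reflexivity.
    + exists (inr (exist _ y h)); reflexivity.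
  - intros [[[x hx]|[x hx]]|[x hx]]; reflexivity.
Qed.

Lemma word_iso_split_without : word_iso G (tp_mul before after) (iw_restrict u (fun x => x <> p)).
Proof.
  pose proof (iw_wf_irrefl G u Wu) as Irr. pose proof (iw_wf_trans G u Wu) as Tr.
  unshelve eexists (fun a => match a with inl x => exist _ (proj1_sig x) _ | inr x => exist _ (proj1_sig x) _ end).
  { intros E. apply (Irr p). rewrite <- E at 1. exact (proj2_sig x). }
  { intros E. apply (Irr p). rewrite <- E at 2. exact (proj2_sig x). }
  split; [|split].
  - intros [[x hx]|[x hx]] [[y hy]|[y hy]]; simpl; split; intros; try tauto;
      try solve [eapply Tr; eauto]; exfalso;
      try (eapply Irr; eapply Tr; eassumption); try (eapply Irr; eapply Tr; [eapply Tr|]; eassumption); eauto.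
  - intros [y hy]. destruct (iw_wf_total G u Wu y p) as [h|[h|h]].
    + exists (inl (exist _ y h)); apply sig_eq; reflexivity.
    + contradiction.
    + exists (inr (exist _ y h)); apply sig_eq; reflexivity.
  - intros [[x hx]|[x hx]]; reflexivity.
Qed.

(* [u = before . p . after] and the deleted word is [before . after], so the
   quotient is the conjugate of the one-letter word [p] by [before]. *)
Lemma arch_eq_delete_one : arch_eq u (iw_restrict u (fun x => x <> p)).
Proof.
  assert (Wb : iw_wf before) by (apply iw_restrict_wf; assumption).
  assert (Wp : iw_wf at_p) by (apply iw_restrict_wf; assumption).
  assert (Wa : iw_wf after) by (apply iw_restrict_wf; assumption).
  assert (Wd : iw_wf (iw_restrict u (fun x => x <> p))) by (apply iw_restrict_wf; assumption).
  apply (NC_restr_eq G HG (tp_mul (tp_mul before at_p) (tp_inv before))).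
  - apply NC_conj; [|assumption]. apply NC_fin; [assumption|].
    exists [exist _ p eq_refl : iL at_p]. intros x; left; apply sig_eq; symmetry; apply (proj2_sig x).
  - apply tp_div_wf; assumption.
  - intros m. rewrite (restr_tp_div G HG u) by assumption.
    rewrite <- (restr_word_iso G _ _ m (tp_mul_wf G _ _ (tp_mul_wf G _ _ Wb Wp) Wa) Wu word_iso_split_at).
    rewrite <- (restr_word_iso G _ _ m (tp_mul_wf G _ _ Wb Wa) Wd word_iso_split_without).
    rewrite !restr_tp_mul, restr_tp_inv, fp_inv_app;
      auto using tp_mul_wf, tp_inv_wf.
    rewrite <- !app_assoc. apply fp_eq_app; [apply fp_eq_refl|]. apply fp_eq_app; [apply fp_eq_refl|].
    rewrite app_assoc. apply (fp_eq_app _ _ [] _ _ _); [|apply fp_eq_refl].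
    apply fp_eq_sym, fp_eq_mul_inv. intros i; apply HG.
Qed.
End OnePosition.

Lemma arch_eq_delete_finite u (l : list (iL u)) S : iw_wf u ->
  (forall x, ~ S x -> In x l) -> arch_eq u (iw_restrict u S).
Proof.
  revert S. induction l as [|p l IH]; intros S W HS.
  - apply restr_eq_arch_eq; auto using iw_restrict_wf. intros m.
    rewrite (restr_word_iso G (iw_restrict u S) u m); auto using iw_restrict_wf; [apply fp_eq_refl|].
    exists (@proj1_sig _ _). split; [|split]; simpl; try tauto.
    intros y. destruct (classic (S y)) as [h|h]; [exists (exist _ y h); reflexivity | destruct (HS y h)].
  - destruct (classic (S p)) as [Hp|Hp].
    { apply IH; auto. intros x Hx. destruct (HS x Hx) as [<-|]; tauto. }
    set (S' := fun x => S x \/ x = p). set (u' := iw_restrict u S').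
    set (p' := exist S' p (or_intror eq_refl) : iL u').
    assert (Wu' : iw_wf u') by (apply iw_restrict_wf; assumption).
    apply (arch_eq_trans G HG _ u'); auto using iw_restrict_wf.
    { apply IH; auto. intros x Hx. destruct (HS x) as [<-|]; auto.
      - intros Sx; apply Hx; left; exact Sx.
      - exfalso; apply Hx; right; reflexivity. }
    apply (arch_eq_trans G HG _ (iw_restrict u' (fun x => x <> p'))); auto using iw_restrict_wf.
    { apply arch_eq_delete_one; assumption. }
    apply restr_eq_arch_eq; auto using iw_restrict_wf. intros m.
    rewrite (restr_word_iso G (iw_restrict u S) (iw_restrict u' (fun x => x <> p')) m);
      auto using iw_restrict_wf; [apply fp_eq_refl|].
    unshelve eexists (fun a => exist _ (exist S' (proj1_sig a) (or_introl (proj2_sig a))) _).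
    { intros E. apply (f_equal (@proj1_sig _ _)) in E. simpl in E. apply Hp. rewrite <- E. apply proj2_sig. }
    split; [|split]; simpl; try tauto.
    intros [[y [hy|hy]] ne].
    + exists (exist _ y hy); apply sig_eq, sig_eq; reflexivity.
    + exfalso. apply ne. subst. apply sig_eq; reflexivity.
Qed.
End Deletion.

Section FactorProjection.
Variables (I : Type) (I_dec : forall i j : I, {i = j} + {i <> j}) (F : I -> GrpOps).
Hypothesis HF : forall i, is_group (F i).

Definition letter_proj j (x : fletter I F) : gcar (F j) :=
  match I_dec (projT1 x) j with
  | left e => eq_rect (projT1 x) (fun t => gcar (F t)) (projT2 x) j e
  | right _ => gone (F j) end.

Definition fp_proj j (w : list (fletter I F)) : gcar (F j) :=
  fold_right (fun x acc => gmul (F j) (letter_proj j x) acc) (gone (F j)) w.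

Lemma fp_proj_app j w1 w2 : fp_proj j (w1 ++ w2) = gmul (F j) (fp_proj j w1) (fp_proj j w2).
Proof.
  destruct (HF j) as (_&As&L1&_).
  induction w1 as [|x w1 IH]; simpl; [rewrite L1 | rewrite IH, As]; reflexivity.
Qed.

Lemma letter_proj_mul j i g h : letter_proj j (existT _ i (gmul (F i) g h))
  = gmul (F j) (letter_proj j (existT _ i g)) (letter_proj j (existT _ i h)).
Proof.
  unfold letter_proj; simpl. destruct (I_dec i j) as [<-|ne]; [reflexivity|].
  destruct (HF j) as (_&_&L1&_). rewrite L1; reflexivity.
Qed.

Lemma letter_proj_one j i : letter_proj j (existT _ i (gone (F i))) = gone (F j).
Proof. unfold letter_proj; simpl. destruct (I_dec i j) as [<-|]; reflexivity. Qed.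

Lemma fp_proj_fp_eq j w w' : fp_eq I F w w' -> fp_proj j w = fp_proj j w'.
Proof.
  destruct (HF j) as (_&As&L1&_).
  induction 1 as [w w' Hs| | |]; auto; [|congruence].
  destruct Hs as [w0 w1 i g h|w0 w1 i g Hg|w0 w1 i g h Hg]; rewrite !fp_proj_app; f_equal; simpl.
  - rewrite letter_proj_mul, As. reflexivity.
  - apply group_geq in Hg; [|apply HF]. subst. rewrite letter_proj_one, L1. reflexivity.
  - apply group_geq in Hg; [|apply HF]. subst. reflexivity.
Qed.

Lemma fp_eq_single_nil i g : fp_eq I F [existT _ i g] [] -> geq (F i) g (gone (F i)).
Proof.
  intros H. apply (fp_proj_fp_eq i) in H. simpl in H. unfold letter_proj in H; simpl in H.
  destruct (I_dec i i) as [e|ne]; [|contradiction].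
  rewrite (Eqdep_dec.UIP_dec I_dec e eq_refl) in H. simpl in H.
  destruct (HF i) as (Eq&_&_&R1&_). rewrite R1 in H. apply Eq, H.
Qed.
End FactorProjection.

Lemma list_bound (l : list nat) : exists k, forall i, In i l -> i < k.
Proof.
  exists (S (list_max l)). intros i Hi.
  pose proof (proj1 (list_max_le l _) (le_n _)) as H. rewrite Forall_forall in H.
  specialize (H i Hi). lia.
Qed.

Section Blocks.
Variables (G : nat -> GrpOps) (A : nat -> Prop) (P : nat -> nat -> Prop).
Hypothesis HG : forall n, is_group (G n).
Hypothesis HPA : forall n i, P n i -> ~ A i.
Hypothesis Hcov : forall i, ~ A i -> exists n, P n i.
Hypothesis Huniq : forall n m i, P n i -> P m i -> n = m.
Hypothesis Hfin : forall n, exists l, forall i, P n i -> In i l.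

Notation B := (block_prod G P).
Notation block_letter n := (fletter {j | P n j} (fun j => G (proj1_sig j))).

Lemma group_factors_inverse_laws n : inverse_laws (G n).
Proof. apply group_inverse_laws, HG. Qed.

Lemma block_inverse_laws n : inverse_laws (B n).
Proof. apply free_product_inverse_laws. intros; apply group_factors_inverse_laws. Qed.

Definition block_dec n (i j : {j | P n j}) : {i = j} + {i <> j}.
Proof.
  destruct (Nat.eq_dec (proj1_sig i) (proj1_sig j)) as [e|ne]; [left; apply sig_eq, e|].
  right; intros ->; apply ne; reflexivity.
Defined.

(* The value on [A] is junk. *)
Definition block_of (i : nat) : nat :=
  match excluded_middle_informative (A i) with
  | left _ => 0
  | right h => proj1_sig (constructive_indefinite_description _ (Hcov i h)) end.

Lemma block_of_spec i : ~ A i -> P (block_of i) i.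
Proof.
  intros h. unfold block_of. destruct (excluded_middle_informative (A i)); [contradiction|]. apply proj2_sig.
Qed.

Lemma block_of_eq n i : P n i -> block_of i = n.
Proof. intros Hp. apply (Huniq _ _ i); auto. apply block_of_spec. eapply HPA; eauto. Qed.

Lemma block_of_letter_eq n i (pi : P n i) (h : ~ A i) g :
  existT (fun n => gcar (B n)) (block_of i)
    [existT (fun j : {j | P (block_of i) j} => gcar (G (proj1_sig j))) (exist _ i (block_of_spec i h)) g]
  = existT (fun n => gcar (B n)) n [existT (fun j : {j | P n j} => gcar (G (proj1_sig j))) (exist _ i pi) g].
Proof.
  generalize (block_of_spec i h). rewrite (block_of_eq n i pi). intros p.
  rewrite (proof_irrelevance _ p pi). reflexivity.
Qed.

Definition to_blocks (a : Letter G) : list (Letter B) :=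
  match a with existT _ i g =>
  match excluded_middle_informative (A i) with
  | left _ => []
  | right h => [existT (fun n => gcar (B n)) (block_of i)
       [existT (fun j : {j | P (block_of i) j} => gcar (G (proj1_sig j))) (exist _ i (block_of_spec i h)) g]]
  end end.

Definition of_block_letter n (x : block_letter n) : list (Letter G) :=
  match excluded_middle_informative (projT2 x = gone (G (proj1_sig (projT1 x)))) with
  | left _ => []
  | right _ => [existT (fun k => gcar (G k)) (proj1_sig (projT1 x)) (projT2 x)] end.

Definition of_blocks (a : Letter B) : list (Letter G) :=
  match a with existT _ n w => flat_map (of_block_letter n) w end.

Lemma to_blocks_level m : exists k, forall a, k <= projT1 a -> forall b, In b (to_blocks a) -> m <= projT1 b.
Proof.
  assert (Hk : exists k, forall i, ~ A i -> block_of i < m -> i < k).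
  { induction m as [|m [k Hk]]; [exists 0; intros; lia|].
    destruct (Hfin m) as [l Hl]. destruct (list_bound l) as [k' Hk'].
    exists (max k k'). intros i hA hb. destruct (Nat.eq_dec (block_of i) m) as [E|E].
    - specialize (Hk' i (Hl i ltac:(rewrite <- E; apply block_of_spec; auto))). lia.
    - specialize (Hk i hA ltac:(lia)). lia. }
  destruct Hk as [k Hk]. exists k. intros [i g] Hi b; simpl in *.
  destruct (excluded_middle_informative (A i)) as [a|h]; simpl; [tauto|].
  intros [<-|[]]; simpl. apply Nat.nlt_ge. intros Hb. specialize (Hk i h Hb). lia.
Qed.

Lemma to_blocks_nontrivial a : ~ geq (G (projT1 a)) (projT2 a) (gone _) ->
  forall b, In b (to_blocks a) -> ~ geq (B (projT1 b)) (projT2 b) (gone _).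
Proof.
  destruct a as [i g]; intros Hg b; simpl in *.
  destruct (excluded_middle_informative (A i)) as [a|h]; simpl; [tauto|].
  intros [<-|[]] Hc; simpl in Hc. apply Hg.
  exact (fp_eq_single_nil _ (block_dec _) _ (fun j => HG _) _ _ Hc).
Qed.

Ltac case_to_blocks :=
  unfold th_restr, to_blocks; simpl;
  match goal with |- context [excluded_middle_informative ?X] =>
    destruct (excluded_middle_informative X) end; simpl; [apply fp_eq_refl|];
  match goal with |- context [Compare_dec.lt_dec ?a ?b] =>
    destruct (Compare_dec.lt_dec a b) end; simpl; [|apply fp_eq_refl].

Lemma to_blocks_merge m n g h : fp_first_eq B m (th_restr G B to_blocks m (existT _ n (gmul (G n) g h)))
  (th_restr G B to_blocks m (existT _ n g) ++ th_restr G B to_blocks m (existT _ n h)).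
Proof.
  case_to_blocks.
  eapply fp_eq_trans; [|apply fp_eq_sym, fp_eq_merge1].
  apply fp_eq_repl1, fp_eq_sym, fp_eq_merge1.
Qed.

Lemma to_blocks_del m n g : geq (G n) g (gone (G n)) -> fp_first_eq B m (th_restr G B to_blocks m (existT _ n g)) [].
Proof.
  intros Hg. case_to_blocks.
  apply fp_eq_trans with [existT (fun i : {i | i < m} => gcar (B (proj1_sig i))) (exist _ (block_of n) l) []].
  - apply fp_eq_repl1, fp_eq_del1, Hg.
  - apply fp_eq_del1, fp_eq_refl.
Qed.

Lemma to_blocks_repl m n g h : geq (G n) g h ->
  fp_first_eq B m (th_restr G B to_blocks m (existT _ n g)) (th_restr G B to_blocks m (existT _ n h)).
Proof. intros E. apply group_geq in E; [|apply HG]. subst. apply fp_eq_refl. Qed.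

Lemma to_blocks_inv m a : fp_first_eq B m (th_restr G B to_blocks m (letter_inv a))
  (fp_first_inv B m (th_restr G B to_blocks m a)).
Proof. destruct a as [n g]. simpl. case_to_blocks. apply fp_eq_refl. Qed.

Lemma of_blocks_in n w b : In b (of_blocks (existT _ n w)) -> P n (projT1 b) /\ projT2 b <> gone _.
Proof.
  simpl. intros Hb. apply in_flat_map in Hb as ([[i pi] g] & _ & Hb). unfold of_block_letter in Hb; simpl in Hb.
  destruct (excluded_middle_informative _) in Hb; simpl in Hb; [tauto|].
  destruct Hb as [<-|[]]; simpl; auto.
Qed.

Lemma of_blocks_level m : exists k, forall a, k <= projT1 a -> forall b, In b (of_blocks a) -> m <= projT1 b.
Proof.
  destruct (list_bound (map block_of (seq 0 m))) as [k Hk]. exists k. intros [n w] Hn b Hb; simpl in Hn.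
  apply of_blocks_in in Hb as [Hp _]. apply Nat.nlt_ge. intros Hlt.
  assert (block_of (projT1 b) < k) by (apply Hk, in_map, in_seq; lia).
  rewrite (block_of_eq _ _ Hp) in *. lia.
Qed.

Lemma of_blocks_nontrivial a : ~ geq (B (projT1 a)) (projT2 a) (gone _) ->
  forall b, In b (of_blocks a) -> ~ geq (G (projT1 b)) (projT2 b) (gone _).
Proof.
  destruct a as [n w]; intros _ b Hb. apply of_blocks_in in Hb as [_ Hb]. rewrite group_geq; auto.
Qed.

Definition block_letter_restr m n (x : block_letter n) :=
  restr_letter m (existT (fun k => gcar (G k)) (proj1_sig (projT1 x)) (projT2 x)).

Lemma th_restr_of_blocks m n w :
  fp_first_eq G m (th_restr B G of_blocks m (existT _ n w)) (flat_map (block_letter_restr m n) w).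
Proof.
  unfold th_restr; simpl. rewrite flat_map_flat_map. apply fp_eq_flat_map. intros [[i pi] g].
  unfold of_block_letter, block_letter_restr; simpl.
  destruct (excluded_middle_informative _) as [e|ne]; simpl.
  - destruct (Compare_dec.lt_dec i m); [|apply fp_eq_refl]. apply fp_eq_sym, fp_eq_del1. apply group_geq; auto.
  - rewrite app_nil_r. apply fp_eq_refl.
Qed.

Lemma block_letter_restr_fp_eq m n w w' : fp_eq {j | P n j} (fun j => G (proj1_sig j)) w w' ->
  fp_first_eq G m (flat_map (block_letter_restr m n) w) (flat_map (block_letter_restr m n) w').
Proof.
  apply fp_eq_flat_map_hom; intros [i pi]; unfold block_letter_restr; simpl; intros;
    destruct (Compare_dec.lt_dec i m); simpl; try apply fp_eq_refl.
  - apply fp_eq_sym, fp_eq_merge1.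
  - apply fp_eq_del1; assumption.
  - apply group_geq in H; [subst; apply fp_eq_refl | apply HG].
Qed.

Lemma of_blocks_merge m n w w' : fp_first_eq G m (th_restr B G of_blocks m (existT _ n (gmul (B n) w w')))
  (th_restr B G of_blocks m (existT _ n w) ++ th_restr B G of_blocks m (existT _ n w')).
Proof. unfold th_restr; simpl. rewrite !flat_map_app. apply fp_eq_refl. Qed.

Lemma of_blocks_del m n w : geq (B n) w (gone (B n)) -> fp_first_eq G m (th_restr B G of_blocks m (existT _ n w)) [].
Proof.
  intros Hw. eapply fp_eq_trans; [apply th_restr_of_blocks|]. exact (block_letter_restr_fp_eq m n w [] Hw).
Qed.

Lemma of_blocks_repl m n w w' : geq (B n) w w' ->
  fp_first_eq G m (th_restr B G of_blocks m (existT _ n w)) (th_restr B G of_blocks m (existT _ n w')).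
Proof.
  intros Hw. eapply fp_eq_trans; [apply th_restr_of_blocks|].
  eapply fp_eq_trans; [apply (block_letter_restr_fp_eq m n w w' Hw) | apply fp_eq_sym, th_restr_of_blocks].
Qed.

Lemma of_blocks_inv m a : fp_first_eq G m (th_restr B G of_blocks m (letter_inv a))
  (fp_first_inv G m (th_restr B G of_blocks m a)).
Proof.
  destruct a as [n w]. simpl. eapply fp_eq_trans; [apply th_restr_of_blocks|].
  eapply fp_eq_trans.
  2: { apply fp_eq_inv; [intros; apply group_factors_inverse_laws | apply fp_eq_sym, th_restr_of_blocks]. }
  rewrite fp_inv_flat_map. unfold fp_inv at 1. rewrite <- map_rev, flat_map_map. apply fp_eq_flat_map.
  intros [[i pi] g]. unfold block_letter_restr; simpl. destruct (Compare_dec.lt_dec i m); apply fp_eq_refl.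
Qed.

Lemma of_blocks_to_blocks_letter k m n (x : block_letter n) :
  (forall a, k <= projT1 a -> forall b, In b (to_blocks a) -> m <= projT1 b) ->
  flat_map (level_map G B to_blocks k m) (flat_map (restr_letter k) (of_block_letter n x)) =
  flat_map (fun _ => restr_letter m (existT (fun n => gcar (B n)) n [x])) (of_block_letter n x).
Proof.
  intros Hk. destruct x as [[i pi] g]. unfold of_block_letter; simpl.
  destruct (excluded_middle_informative _) as [e|ne]; simpl; [reflexivity|]. rewrite !app_nil_r.
  assert (h : ~ A i) by (eapply HPA; eauto).
  destruct (Compare_dec.lt_dec i k) as [l|l]; simpl.
  - rewrite app_nil_r. unfold level_map, th_restr, to_blocks; simpl.
    destruct (excluded_middle_informative (A i)) as [a|h']; [contradiction|].
    rewrite (block_of_letter_eq n i pi h'). simpl. rewrite app_nil_r. reflexivity.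
  - specialize (Hk (existT _ i g) ltac:(simpl; lia)). unfold to_blocks in Hk. simpl in Hk.
    destruct (excluded_middle_informative (A i)) as [a|h']; [contradiction|].
    specialize (Hk _ (or_introl eq_refl)). simpl in Hk. rewrite (block_of_eq n i pi) in Hk.
    destruct (Compare_dec.lt_dec n m); [lia | reflexivity].
Qed.

(* Reassembling a block from its nontrivial letters. *)
Lemma block_letters_merge m n w :
  fp_first_eq B m (flat_map (fun x => flat_map (fun _ => restr_letter m (existT (fun n => gcar (B n)) n [x]))
                                           (of_block_letter n x)) w)
                  (restr_letter m (existT (fun n => gcar (B n)) n w)).
Proof.
  unfold restr_letter. destruct (Compare_dec.lt_dec n m) as [l|l].
  - induction w as [|x w IH]; simpl.
    + apply fp_eq_sym, fp_eq_del1, fp_eq_refl.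
    + unfold of_block_letter at 1. destruct (excluded_middle_informative _) as [e|ne]; simpl.
      * eapply fp_eq_trans; [apply IH|]. apply fp_eq_repl1. simpl. apply fp_eq_sym.
        destruct x as [xi xg]; simpl in e. subst xg.
        apply rst_step, (fp_del _ _ [] w xi), group_geq; auto.
      * eapply fp_eq_trans; [apply (fp_eq_app _ _ [_] [_] _ _ (fp_eq_refl _ _ _) IH)|].
        apply fp_eq_merge1.
  - induction w as [|x w IH]; simpl; [apply fp_eq_refl|].
    unfold of_block_letter at 1. destruct (excluded_middle_informative _); simpl; assumption.
Qed.

Lemma to_blocks_of_blocks_restr_eq v : iw_wf v ->
  restr_eq B (iw_subst G B to_blocks (iw_subst B G of_blocks v)) v.
Proof.
  intros W m.
  destruct (to_blocks_level m) as [k Hk]. destruct (of_blocks_level k) as [k' Hk'].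
  assert (Wg : iw_wf (iw_subst B G of_blocks v)).
  { apply iw_subst_wf; [apply of_blocks_level | apply of_blocks_nontrivial | exact W]. }
  rewrite (restr_iw_subst_level_map G B to_blocks to_blocks_level to_blocks_nontrivial _ m k Wg Hk).
  rewrite (restr_iw_subst_level_map B G of_blocks of_blocks_level of_blocks_nontrivial _ k (max m k') W).
  2: { intros a Ha. apply Hk'. lia. }
  rewrite (restr_le B v m (max m k') W ltac:(lia)).
  rewrite flat_map_flat_map. apply fp_eq_flat_map. intros [[n pn] w].
  unfold level_map at 2, th_restr. simpl. rewrite !flat_map_flat_map.
  erewrite flat_map_ext; [apply block_letters_merge|].
  intros x. rewrite <- flat_map_flat_map. exact (of_blocks_to_blocks_letter k m n x Hk).
Qed.

Lemma to_blocks_index a j : j < length (to_blocks a) -> j = 0 /\ ~ A (projT1 a).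
Proof.
  destruct a as [i g]; unfold to_blocks; simpl.
  destruct (excluded_middle_informative (A i)); simpl; [lia | split; [lia | assumption]].
Qed.

Lemma of_blocks_to_blocks_index a j j' :
  j' < length (of_blocks (nth j (to_blocks a) (dummy_letter B))) -> j' = 0.
Proof.
  destruct a as [i g]; unfold to_blocks; simpl.
  destruct (excluded_middle_informative (A i)); simpl; [destruct j; simpl; lia|].
  destruct j as [|[|j]]; simpl; try lia.
  unfold of_block_letter; simpl. destruct (excluded_middle_informative _); simpl; lia.
Qed.

Lemma of_blocks_to_blocks_single a : ~ A (projT1 a) -> projT2 a <> gone _ ->
  of_blocks (nth 0 (to_blocks a) (dummy_letter B)) = [a].
Proof.
  destruct a as [i g]; unfold to_blocks; simpl. intros hA hg.
  destruct (excluded_middle_informative (A i)); [contradiction|]. simpl.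
  unfold of_block_letter; simpl. destruct (excluded_middle_informative _); [contradiction | reflexivity].
Qed.

Notation iw_to_blocks := (iw_subst G B to_blocks).
Notation iw_of_blocks := (iw_subst B G of_blocks).

Lemma iw_to_blocks_wf u : iw_wf u -> iw_wf (iw_to_blocks u).
Proof. apply iw_subst_wf; [apply to_blocks_level | apply to_blocks_nontrivial]. Qed.

Lemma iw_of_blocks_wf v : iw_wf v -> iw_wf (iw_of_blocks v).
Proof. apply iw_subst_wf; [apply of_blocks_level | apply of_blocks_nontrivial]. Qed.

Lemma word_iso_of_blocks_to_blocks u : iw_wf u ->
  word_iso G (iw_of_blocks (iw_to_blocks u)) (iw_restrict G u (fun x => ~ A (projT1 (iw u x)))).
Proof.
  intros W.
  exists (fun p => exist (fun x => ~ A (projT1 (iw u x))) (fst (proj1_sig (fst (proj1_sig p))))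
                     (proj2 (to_blocks_index _ _ (proj2_sig (fst (proj1_sig p)))))).
  split; [|split].
  - intros [[[[x j] h] j'] h'] [[[[y l] hl] l'] hl']. simpl in *.
    destruct (to_blocks_index _ _ h) as [-> _], (to_blocks_index _ _ hl) as [-> _].
    rewrite (of_blocks_to_blocks_index _ _ _ h'), (of_blocks_to_blocks_index _ _ _ hl').
    split; [intros [[?|[? ?]]|[? ?]]; auto; lia | auto].
  - intros [x hx].
    assert (hg : projT2 (iw u x) <> gone _).
    { intros E. apply (iw_wf_nontrivial G u W x). apply group_geq; auto. }
    assert (h0 : 0 < length (to_blocks (iw u x))).
    { destruct (iw u x) as [i g]; unfold to_blocks; simpl in *.
      destruct (excluded_middle_informative (A i)); simpl; [contradiction | lia]. }
    set (r := exist (fun p : iL u * nat => snd p < length (to_blocks (iw u (fst p)))) (x, 0) h0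
              : iL (iw_to_blocks u)).
    assert (h0' : 0 < length (of_blocks (iw (iw_to_blocks u) r))).
    { change (0 < length (of_blocks (nth 0 (to_blocks (iw u x)) (dummy_letter B)))).
      rewrite of_blocks_to_blocks_single; simpl; auto. }
    exists (exist (fun p : iL (iw_to_blocks u) * nat => snd p < length (of_blocks (iw (iw_to_blocks u) (fst p))))
              (r, 0) h0').
    apply sig_eq; reflexivity.
  - intros [[[[x j] h] j'] h']. simpl in *.
    destruct (to_blocks_index _ _ h) as [-> hA]. rewrite (of_blocks_to_blocks_index _ _ _ h').
    rewrite of_blocks_to_blocks_single; [reflexivity | assumption|].
    intros E. apply (iw_wf_nontrivial G u W x). apply group_geq; auto.
Qed.

Lemma arch_eq_iw_to_blocks u v : iw_wf u -> iw_wf v ->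
  arch_eq u v -> arch_eq (iw_to_blocks u) (iw_to_blocks v).
Proof.
  apply (arch_eq_iw_subst G B to_blocks to_blocks_level to_blocks_nontrivial group_factors_inverse_laws
           block_inverse_laws to_blocks_merge to_blocks_del to_blocks_repl to_blocks_inv).
Qed.

Lemma iw_to_blocks_tp_mul u v : iw_wf u -> iw_wf v ->
  arch_eq (iw_to_blocks (tp_mul u v)) (tp_mul (iw_to_blocks u) (iw_to_blocks v)).
Proof.
  intros Wu Wv. apply (restr_eq_arch_eq B block_inverse_laws); auto using iw_to_blocks_wf, tp_mul_wf.
  exact (iw_subst_tp_mul G B to_blocks to_blocks_level to_blocks_nontrivial u v Wu Wv).
Qed.

Lemma iw_to_blocks_surjective v : iw_wf v -> exists u, iw_wf u /\ arch_eq (iw_to_blocks u) v.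
Proof.
  intros Wv. exists (iw_of_blocks v). split; [apply iw_of_blocks_wf, Wv|].
  apply (restr_eq_arch_eq B block_inverse_laws); auto using iw_to_blocks_wf, iw_of_blocks_wf.
  apply to_blocks_of_blocks_restr_eq, Wv.
Qed.

Hypothesis HA : exists l : list nat, forall i, A i -> In i l.

Lemma arch_eq_delete_A u : iw_wf u -> arch_eq u (iw_restrict G u (fun x => ~ A (projT1 (iw u x)))).
Proof.
  intros W. destruct HA as [la Hla].
  assert (Hl : exists l, forall x, In (projT1 (iw u x)) la -> In x l).
  { clear Hla. induction la as [|i la [l Hl]]; [exists []; simpl; tauto|].
    destruct (iw_wf_finite G u W i) as [l' Hl']. exists (l' ++ l). intros x [E|Hx]; apply in_app_iff; auto. }
  destruct Hl as [l Hl]. apply (arch_eq_delete_finite G group_factors_inverse_laws u l); auto.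
  intros x Hx. apply Hl, Hla, NNPP, Hx.
Qed.

Lemma arch_eq_iw_to_blocks_rev u v : iw_wf u -> iw_wf v ->
  arch_eq (iw_to_blocks u) (iw_to_blocks v) -> arch_eq u v.
Proof.
  intros Wu Wv Hf.
  pose proof group_factors_inverse_laws as HGi.
  apply (arch_eq_iw_subst B G of_blocks of_blocks_level of_blocks_nontrivial block_inverse_laws HGi
           of_blocks_merge of_blocks_del of_blocks_repl of_blocks_inv) in Hf; auto using iw_to_blocks_wf.
  set (Su := fun x : iL u => ~ A (projT1 (iw u x))). set (Sv := fun x : iL v => ~ A (projT1 (iw v x))).
  assert (Wsu : iw_wf (iw_restrict G u Su)) by (apply iw_restrict_wf; auto).
  assert (Wsv : iw_wf (iw_restrict G v Sv)) by (apply iw_restrict_wf; auto).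
  pose proof (iw_of_blocks_wf _ (iw_to_blocks_wf _ Wu)) as Wu'.
  pose proof (iw_of_blocks_wf _ (iw_to_blocks_wf _ Wv)) as Wv'.
  assert (E : arch_eq (iw_restrict G u Su) (iw_restrict G v Sv)).
  { apply (arch_eq_restr_eq G HGi _ _ _ _ Wu' Wv' Wsu Wsv); auto; intros m.
    - rewrite (restr_word_iso G _ _ m Wu' Wsu (word_iso_of_blocks_to_blocks u Wu)). apply fp_eq_refl.
    - rewrite (restr_word_iso G _ _ m Wv' Wsv (word_iso_of_blocks_to_blocks v Wv)). apply fp_eq_refl. }
  apply (arch_eq_trans G HGi _ (iw_restrict G u Su)); auto using arch_eq_delete_A.
  apply (arch_eq_trans G HGi _ (iw_restrict G v Sv)); auto.
  apply (arch_eq_sym G HGi); auto using arch_eq_delete_A.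
Qed.
End Blocks.

Theorem proposition18 (G : nat -> GrpOps) (A : nat -> Prop) (P : nat -> nat -> Prop) :
  (forall n, is_group (G n)) ->
  (exists l : list nat, forall i, A i -> In i l) ->
  (forall n i, P n i -> ~ A i) ->
  (forall i, ~ A i -> exists n, P n i) ->
  (forall n m i, P n i -> P m i -> n = m) ->
  (forall n, exists i, P n i) ->
  (forall n, exists l : list nat, forall i, P n i -> In i l) ->
  arch_iso G (block_prod G P).
Proof.
  (* The blocks need not be nonempty. *)
  intros HG HA HPA Hcov Huniq _ Hfin.
  exists (iw_subst G (block_prod G P) (to_blocks G A P Hcov)).
  split; [|split; [|split]].
  - apply iw_to_blocks_wf; assumption.
  - intros u v Wu Wv. split.
    + apply arch_eq_iw_to_blocks; assumption.
    + apply arch_eq_iw_to_blocks_rev; assumption.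
  - apply iw_to_blocks_tp_mul; assumption.
  - apply iw_to_blocks_surjective; assumption.
Qed.
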